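(* Let $G$ be a finite simple connected graph with no $K_5$ minor, not isomorphic to $C_5$, that has no dynamic $4$-coloring, and suppose $G$ has the minimum number of edges among all such graphs (i.e., every finite simple connected graph with no $K_5$ minor, not isomorphic to $C_5$, and with fewer edges than $G$ is dynamically $4$-colorable). Then $G$ is $2$-connected.
   Context: All graphs are finite and simple. Given a proper vertex coloring of a graph, a vertex $v$ is happy if either $v$ has at most one neighbor or $v$ has two neighbors receiving distinct colors. A dynamic $4$-coloring is a proper vertex coloring with at most $4$ colors in which every vertex is happy. *)

From mathcomp Require Import all_boot.
Set Implicit Arguments. Unset Strict Implicit. Unset Printing Implicit Defensive.

Section Graphs.
Variable T : finType.
Implicit Type e : rel T.

Definition simple_graph e : Prop := symmetric e /\ irreflexive e.

(* number of edges: ordered adjacent pairs counted twice *)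
Definition nedges e : nat := #|[set p : T * T | e p.1 p.2]| %/ 2.

Definition restr e (S : {set T}) : rel T := [rel x y | [&& e x y, x \in S & y \in S]].

Definition connected_in e (S : {set T}) : Prop :=
  S != set0 /\ forall x y, x \in S -> y \in S -> connect (restr e S) x y.

Definition connected_graph e : Prop := connected_in e [set: T].

Definition two_connected e : Prop :=
  2 < #|T| /\ forall v : T, connected_in e [set~ v].

Definition has_K5_minor e : Prop :=
  exists B : 'I_5 -> {set T},
    (forall i, connected_in e (B i)) /\
    (forall i j, i != j -> [disjoint B i & B j]) /\
    (forall i j, i != j -> exists x y, [/\ x \in B i, y \in B j & e x y]).

Definition c5rel : rel 'I_5 :=
  fun i j => (nat_of_ord j == (i.+1 %% 5)) || (nat_of_ord i == (j.+1 %% 5)).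

Definition iso_C5 e : Prop :=
  exists f : 'I_5 -> T, bijective f /\ forall i j, e (f i) (f j) = c5rel i j.

Definition proper_coloring e (c : T -> 'I_4) : Prop :=
  forall x y, e x y -> c x != c y.

Definition happy e (c : T -> 'I_4) (v : T) : Prop :=
  #|[set u | e v u]| <= 1 \/ exists u w, [/\ e v u, e v w & c u != c w].

Definition dynamic_4_colorable e : Prop :=
  exists c : T -> 'I_4, proper_coloring e c /\ forall v, happy e c v.

End Graphs.

From mathcomp Require Import all_boot zify fingroup perm.
From Stdlib Require Import Classical.
Set Implicit Arguments. Unset Strict Implicit. Unset Printing Implicit Defensive.

(* Suppose G - v is disconnected, with C a component of G - v and D the rest.
   The graphs G1 = G[C + v] and G2 = G[D + v] are connected, K5-minor free and
   have fewer edges than G, so each is dynamically 4-colourable or is C5; in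
   every case it has a proper 4-colouring in which all vertices except possibly
   v are happy.  Permuting the colours of G2 so that v gets its G1 colour and a
   G2-neighbour of v avoids the colour of a G1-neighbour of v glues the two
   colourings into a dynamic 4-colouring of G.  Graphs on at most two vertices
   are trivially dynamically 4-colourable. *)

Section Connect.
Variable T : finType.
Implicit Types (e : rel T) (S : {set T}).

Lemma restr_sym e S : symmetric e -> symmetric (restr e S).
Proof. by move=> se x y; rewrite /restr /= se [(y \in S) && _]andbC. Qed.

Lemma connect_restrT e x y : connect (restr e [set: T]) x y = connect e x y.
Proof. by apply: eq_connect => a b; rewrite /restr /= !inE !andbT. Qed.

Lemma connect_restr_sub e (A B : {set T}) :
  A \subset B -> subrel (connect (restr e A)) (connect (restr e B)).
Proof.
move=> AB; apply: connect_sub => a b /and3P[eab aA bA]; apply: connect1.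
by rewrite /restr /= eab !(subsetP AB).
Qed.

Lemma connect_restr_mem e S x y : connect (restr e S) x y -> x \in S -> y \in S.
Proof.
move=> /connectP[p + ->]; elim: p x => //= z p IH x /andP[/and3P[_ _ zS] pz] _.
exact: IH.
Qed.

Lemma connect_exit e (P : {set T}) x z :
  connect e x z -> x \in P -> z \notin P ->
  exists a b, [/\ connect (restr e P) x a, a \in P, b \notin P & e a b].
Proof.
move=> /connectP[p + ->]; elim: p x => [|y p IH] x /=; first by move=> _ ->.
move=> /andP[exy py] xP zP; case yP: (y \in P); last by exists x, y; rewrite yP.
have [a [b [ya aP bP eab]]] := IH y py yP zP.
exists a, b; split=> //; apply: connect_trans ya; apply: connect1.
by rewrite /restr /= exy xP yP.
Qed.

End Connect.

Lemma connect_homo (T1 T2 : finType) (e1 : rel T1) (e2 : rel T2) (f : T1 -> T2) :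
  {homo f : x y / e1 x y >-> e2 x y} ->
  {homo f : x y / connect e1 x y >-> connect e2 x y}.
Proof.
move=> hf x _ /connectP[p + ->]; elim: p x => //= y p IH x /andP[/hf exy /IH].
exact: connect_trans (connect1 exy).
Qed.

Lemma avoid2 (T : finType) (a b : T) : 2 < #|T| -> exists k : T, k != a /\ k != b.
Proof.
move=> T_gt2; have : ~~ ([set: T] \subset [set a; b]).
  apply: contraTN T_gt2 => /subset_leq_card; rewrite cardsT cards2 -leqNgt.
  by move/leq_trans; apply; case: (a != b).
by case/subsetPn => k _; rewrite !inE negb_or => /andP[ka kb]; exists k.
Qed.

Lemma perm2_exists (T : finType) (a b a' b' : T) :
  a != b -> a' != b' -> exists p : {perm T}, p a = a' /\ p b = b'.
Proof.
move=> ab a'b'; pose s := tperm a a'.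
have sb : s b != a' by rewrite -[a' in _ != a'](tpermL a a') (inj_eq perm_inj) eq_sym.
exists (s * tperm (s b) b')%g; rewrite !permM tpermL /s tpermL tpermD //.
by rewrite eq_sym.
Qed.

Definition dynamic_except (T : finType) (e : rel T) (c : T -> 'I_4) (v : T) :=
  proper_coloring e c /\ forall x, x != v -> happy e c x.

Section Transfer.
Variables (T1 T2 : finType) (e1 : rel T1) (e2 : rel T2).

Lemma proper_coloring_comp (h : T1 -> T2) (c : T2 -> 'I_4) :
  {homo h : x y / e1 x y >-> e2 x y} -> proper_coloring e2 c ->
  proper_coloring e1 (c \o h).
Proof. by move=> hh pc x y /hh; apply: pc. Qed.

Lemma happy_transfer (c1 : T1 -> 'I_4) (c2 : T2 -> 'I_4) (h : T1 -> T2)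
    (pi : 'I_4 -> 'I_4) x :
  injective pi ->
  (forall u, e1 x u -> e2 (h x) (h u) /\ c2 (h u) = pi (c1 u)) ->
  (forall w, e2 (h x) w -> exists2 u, e1 x u & w = h u) ->
  happy e1 c1 x -> happy e2 c2 (h x).
Proof.
move=> pi_inj fwd bwd [deg|[u [w [xu xw cuw]]]].
  left; apply: leq_trans deg; apply: leq_trans (leq_imset_card h _).
  apply: subset_leq_card; apply/subsetP => w; rewrite inE => /bwd[u xu ->].
  by apply: imset_f; rewrite inE.
have [xu' cu] := fwd u xu; have [xw' cw] := fwd w xw.
by right; exists (h u), (h w); rewrite cu cw (inj_eq pi_inj).
Qed.

End Transfer.

Lemma happy_restr (T : finType) (e : rel T) (S : {set T}) (c c' : T -> 'I_4)
    (pi : 'I_4 -> 'I_4) x :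
  injective pi -> x \in S -> (forall w, e x w -> w \in S) ->
  (forall u, u \in S -> c u = pi (c' u)) ->
  happy (restr e S) c' x -> happy e c x.
Proof.
move=> pi_inj xS nbr cc'; apply: (happy_transfer (h := id) pi_inj).
  by move=> u /and3P[xu _ uS]; rewrite cc'.
by move=> w xw; exists w => //; rewrite /restr /= xw xS nbr.
Qed.

(* C5 has no dynamic 4-colouring; colouring it 0,1,2,3,1 from [i0] on leaves
   only [i0] unhappy. *)
Definition c5_palette : seq 'I_4 :=
  [:: ord0; @Ordinal 4 1 isT; @Ordinal 4 2 isT; @Ordinal 4 3 isT; @Ordinal 4 1 isT].

Definition c5_coloring (i0 i : 'I_5) : 'I_4 :=
  nth ord0 c5_palette ((i + 5 - i0) %% 5).

Lemma c5_coloring_dynamic_except i0 : dynamic_except c5rel (c5_coloring i0) i0.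
Proof.
split.
  by move: i0 => [[|[|[|[|[|?]]]]] ?] [[|[|[|[|[|?]]]]] ?] [[|[|[|[|[|?]]]]] ?].
move=> i ii0; right; exists (ordS i), (ord_pred i); move: ii0.
by case: i0 i => [[|[|[|[|[|?]]]]] ?] [[|[|[|[|[|?]]]]] ?].
Qed.

Lemma iso_C5_dynamic_except (T : finType) (e : rel T) v :
  iso_C5 e -> exists c, dynamic_except e c v.
Proof.
move=> [f [[g fK gK] ef]]; exists (c5_coloring (g v) \o g); split.
  apply: proper_coloring_comp (proj1 (c5_coloring_dynamic_except _)).
  by move=> x y; rewrite -ef !gK.
move=> x xv; rewrite -[x]gK.
apply: (happy_transfer (e1 := c5rel) (c1 := c5_coloring (g v)) (h := f) (@inj_id _)).
- by move=> u xu; rewrite ef /= fK.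
- by move=> w; rewrite -[w in e _ w]gK ef => xw; exists (g w); rewrite ?gK.
- by apply: (proj2 (c5_coloring_dynamic_except _)); rewrite (can_eq gK).
Qed.

Section Induced.
Variables (T : finType) (e : rel T) (S : {set T}).

Definition induced : rel {x : T | x \in S} := fun u w => e (val u) (val w).

Lemma induced_simple : simple_graph e -> simple_graph induced.
Proof. by move=> [se ie]; split=> [u w|u]; [exact: se | exact: ie]. Qed.

Lemma induced_connected v :
  symmetric e -> v \in S -> (forall z, z \in S -> connect (restr e S) z v) ->
  connected_graph induced.
Proof.
move=> se vS conn; split; first by apply/set0Pn; exists (Sub v vS); rewrite inE.
move=> u w _ _; rewrite connect_restrT -[u](valKd u) -[w](valKd u w).
apply: (@connect_homo _ _ (restr e S)).
  by move=> a b /and3P[eab aS bS]; rewrite /induced !insubdK.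
apply: connect_trans (conn _ (valP u)) _.
by rewrite (sym_connect_sym (restr_sym S se)); apply: conn (valP w).
Qed.

Lemma has_K5_minor_induced : has_K5_minor induced -> has_K5_minor e.
Proof.
move=> [B [Bconn [Bdisj Badj]]]; exists (fun i => val @: B i); split; [|split].
- move=> i; have [/set0Pn[u uB] conn] := Bconn i; split.
    by apply/set0Pn; exists (val u); apply: imset_f.
  move=> _ _ /imsetP[x xB ->] /imsetP[y yB ->]; apply: connect_homo (conn x y xB yB).
  by move=> a b /and3P[eab aB bB]; apply/and3P; split; rewrite ?imset_f.
- move=> i j ij; rewrite -setI_eq0; apply/eqP/setP => x; rewrite !inE.
  apply/andP => -[/imsetP[u uB ->] /imsetP[w wB /val_inj uw]].
  by rewrite -uw (disjointFr (Bdisj i j ij) uB) in wB.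
- move=> i j ij; have [x [y [xB yB exy]]] := Badj i j ij.
  by exists (val x), (val y); rewrite !imset_f.
Qed.

(* The edge v-w, counted as two ordered pairs, is lost in the induced graph. *)
Lemma induced_nedges_lt v w :
  symmetric e -> v \in S -> w \notin S -> e v w -> nedges induced < nedges e.
Proof.
move=> se vS wS evw; set E := [set p : T * T | e p.1 p.2].
set Es := [set p | induced p.1 p.2].
pose f (p : {x | x \in S} * {x | x \in S}) := (val p.1, val p.2).
have f_inj : injective f by move=> [a b] [a' b'] [/val_inj -> /val_inj ->].
have notw (x : {x | x \in S}) : val x != w by apply: contraNneq wS => <-; apply: valP.
have sub : f @: Es \subset E :\ (v, w) :\ (w, v).
  apply/subsetP => _ /imsetP[[a b] ab ->]; rewrite !inE in ab *.
  by rewrite /f /= -!pair_eqE /= !negb_and !notw !orbT.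
have vwE : (v, w) \in E by rewrite inE.
have wvE : (w, v) \in E :\ (v, w).
  by rewrite !inE -pair_eqE /= se evw andbT negb_and eq_sym (memPn wS v vS).
have := subset_leq_card sub; rewrite card_imset //.
have := cardsD1 (v, w) E; have := cardsD1 (w, v) (E :\ (v, w)).
rewrite vwE wvE /nedges -/E -/Es.
move: #|Es| #|E| #|E :\ _| #|E :\ _ :\ _| => ? ? ? ?; lia.
Qed.

Lemma dynamic_except_induced (c : {x | x \in S} -> 'I_4) s :
  dynamic_except induced c s -> dynamic_except (restr e S) (c \o insubd s) (val s).
Proof.
move=> [pc hc]; split.
  apply: proper_coloring_comp pc => x y /and3P[exy xS yS].
  by rewrite /induced !insubdK.
move=> x xs; case: (boolP (x \in S)) => [xS|xS]; last first.
  left; suff -> : [set u | restr e S x u] = set0 by rewrite cards0.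
  by apply/setP => u; rewrite !inE /restr /= (negbTE xS) andbF.
rewrite -(insubdK s xS).
apply: (happy_transfer (e1 := induced) (c1 := c) (h := val) (@inj_id _)).
- by move=> u xu; rewrite /= valKd; split=> //; apply/and3P; split=> //; apply: valP.
- move=> w /and3P[]; rewrite insubdK // => xw _ wS.
  by exists (insubd s w); rewrite /induced !insubdK.
- by apply: hc; apply: contraNneq xs => <-; rewrite insubdK.
Qed.

End Induced.
Arguments induced {T} e S.

(* [v] separates [P] from the rest of the graph: [P] is a union of components
   of [G - v]. *)
Definition separates (T : finType) (e : rel T) (v : T) (P : {set T}) :=
  v \notin P /\ forall a b, a \in P -> e a b -> b \in v |: P.

Lemma setU1_setC_setI (T : finType) (v : T) (A : {set T}) :
  (v |: A) :&: (v |: ~: (v |: A)) = [set v].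
Proof.
by apply/setP => z; rewrite !inE; case: eqVneq => //=; case: (z \in A).
Qed.

Lemma setU1_setC_setU (T : finType) (v : T) (A : {set T}) :
  (v |: A) :|: (v |: ~: (v |: A)) = [set: T].
Proof.
by apply/setP => z; rewrite !inE; case: eqVneq => //=; case: (z \in A).
Qed.

Section Separation.
Variables (T : finType) (e : rel T) (v : T) (P : {set T}).
Hypotheses (se : symmetric e) (sepP : separates e v P).

Lemma separates_setC : separates e v (~: (v |: P)).
Proof.
have [vP closedP] := sepP; split; first by rewrite !inE eqxx.
move=> a b; rewrite !inE negb_or => /andP[av aP] eab.
case: eqVneq => //= bv; apply: contra aP => bP.
by have := closedP b a bP; rewrite se eab !inE (negbTE av) => /(_ isT).
Qed.

Lemma separates_edge a b : e a b ->
  (a \in v |: P) && (b \in v |: P)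
  || (a \in v |: ~: (v |: P)) && (b \in v |: ~: (v |: P)).
Proof.
have [_ closedP] := sepP; have [_ closedQ] := separates_setC.
move=> eab; case: (boolP (a \in P)) => [aP|aP].
  by rewrite (setU1r v aP) (closedP a b aP eab).
case: (boolP (a \in ~: (v |: P))) => [aQ|].
  by rewrite (setU1r v aQ) (closedQ a b aQ eab) orbT.
rewrite !inE negbK (negbTE aP) orbF => /eqP ->; rewrite eqxx /=.
by case: (b == v); case: (b \in P).
Qed.

Hypothesis conn : forall a b, connect e a b.

Lemma separates_exit z : z \in P -> exists2 a, connect (restr e P) z a & e a v.
Proof.
have [vP closedP] := sepP; move=> zP.
have [a [b [za aP bP eab]]] := connect_exit (conn z v) zP vP.
by exists a => //; move: (closedP a b aP eab); rewrite !inE (negbTE bP) orbF => /eqP <-.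
Qed.

Lemma separates_connect z : z \in v |: P -> connect (restr e (v |: P)) z v.
Proof.
case/setU1P => [-> //|zP]; have [a za av] := separates_exit zP.
apply: connect_trans (connect_restr_sub (subsetUr _ _) za) (connect1 _).
by rewrite /restr /= av setU11 setU1r // (connect_restr_mem za).
Qed.

Lemma separates_neighbor : P != set0 -> exists2 u, u \in P & e v u.
Proof.
case/set0Pn => z zP; have [a za av] := separates_exit zP.
by exists a; rewrite 1?se // (connect_restr_mem za).
Qed.

End Separation.

Lemma component_separates (T : finType) (e : rel T) v x : x != v ->
  separates e v [set z | connect (restr e [set~ v]) x z].
Proof.
move=> xv; have xA : x \in [set~ v] by rewrite !inE.
split=> [|a b]; rewrite !inE.
  by apply: contraTN (eqxx v) => /connect_restr_mem/(_ xA); rewrite !inE.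
move=> xa eab; have aA := connect_restr_mem xa xA.
case: eqVneq => //= bv; apply: connect_trans xa (connect1 _).
by rewrite /restr /= eab aA !inE bv.
Qed.

Section Glue.
Variables (T : finType) (e : rel T) (S1 S2 : {set T}) (v u1 u2 : T).
Variables (c1 c2 : T -> 'I_4).
Hypotheses (S1I2 : S1 :&: S2 = [set v]) (S1U2 : S1 :|: S2 = [set: T]).
Hypothesis edge_in :
  forall a b, e a b -> (a \in S1) && (b \in S1) || (a \in S2) && (b \in S2).
Hypotheses (u1S1 : u1 \in S1) (u2S2 : u2 \in S2) (vu1 : e v u1) (vu2 : e v u2).
Hypotheses (dc1 : dynamic_except (restr e S1) c1 v)
  (dc2 : dynamic_except (restr e S2) c2 v).

Lemma glued_neighbor z w : z != v -> e z w ->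
  (z \in S1 -> w \in S1) /\ (z \in S2 -> w \in S2).
Proof.
move=> zv /edge_in /orP[] /andP[zS wS]; split=> // zS';
  have : z \in S1 :&: S2 by rewrite inE zS zS'.
all: by rewrite S1I2 inE (negbTE zv).
Qed.

Lemma glue_dynamic_colorable : dynamic_4_colorable e.
Proof.
have [[pc1 hc1] [pc2 hc2]] := (dc1, dc2).
have /setIP[_ vS2] : v \in S1 :&: S2 by rewrite S1I2 set11.
have [k [kv ku1]] : exists k, k != c1 v /\ k != c1 u1.
  by apply: avoid2; rewrite card_ord.
have [p [pv pu2]] : exists p : {perm 'I_4}, p (c2 v) = c1 v /\ p (c2 u2) = k.
  by apply: perm2_exists; [apply: pc2; rewrite /restr /= vu2 vS2 | rewrite eq_sym].
pose c z := if z \in S1 then c1 z else p (c2 z).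
have cS2 z : z \in S2 -> c z = p (c2 z).
  rewrite /c; case: ifP => // zS1 zS2.
  have : z \in S1 :&: S2 by rewrite inE zS1 zS2.
  by rewrite S1I2 inE => /eqP ->.
exists c; split.
  move=> a b /[dup] eab /edge_in /orP[] /andP[aS bS].
    by rewrite /c aS bS; apply: pc1; rewrite /restr /= eab aS bS.
  by rewrite !cS2 // (inj_eq perm_inj); apply: pc2; rewrite /restr /= eab aS bS.
move=> z; have [->|zv] := eqVneq z v.
  by right; exists u1, u2; rewrite (cS2 u2 u2S2) pu2 /c u1S1 eq_sym.
have : z \in S1 :|: S2 by rewrite S1U2.
case/setUP => zS.
  move: (hc1 z zv); apply: (happy_restr (@inj_id _) zS) => [w|u uS].
    by move=> /(glued_neighbor zv) [] /(_ zS).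
  by rewrite /c uS.
move: (hc2 z zv); apply: (happy_restr perm_inj zS) => [w|]; last exact: cS2.
by move=> /(glued_neighbor zv) [] _ /(_ zS).
Qed.

End Glue.

Lemma dynamic_colorable_small (T : finType) (e : rel T) :
  irreflexive e -> #|T| <= 2 -> dynamic_4_colorable e.
Proof.
move=> ie T_le2; have T_le4 : #|T| <= 4 by apply: leq_trans T_le2 _.
exists (fun x => widen_ord T_le4 (enum_rank x)); split.
  move=> x y; apply: contraTneq => /(congr1 val) /= /val_inj /enum_rank_inj ->.
  by rewrite ie.
move=> x; left; apply: leq_trans (_ : #|[set~ x]| <= 1).
  apply: subset_leq_card; apply/subsetP => u; rewrite !inE.
  by apply: contraTneq => ->; rewrite ie.
by rewrite cardsC1; case: #|T| T_le2 => [|[|[]]].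
Qed.

Definition dynamic_colorable_below (n : nat) :=
  forall (T' : finType) (e' : rel T'),
    simple_graph e' -> connected_graph e' -> ~ has_K5_minor e' -> ~ iso_C5 e' ->
    nedges e' < n -> dynamic_4_colorable e'.

Section CutVertex.
Variables (T : finType) (e : rel T) (v : T).
Hypotheses (sg : simple_graph e) (cg : connected_graph e) (noK5 : ~ has_K5_minor e).
Hypothesis minimal : dynamic_colorable_below (nedges e).

Lemma piece_dynamic_except (S : {set T}) w :
  v \in S -> w \notin S -> e v w ->
  (forall z, z \in S -> connect (restr e S) z v) ->
  exists c, dynamic_except (restr e S) c v.
Proof.
move=> vS wS evw conn; have [se _] := sg; pose s : {x | x \in S} := Sub v vS.
suff [c dc] : exists c, dynamic_except (induced e S) c s.
  by exists (c \o insubd s); apply: (dynamic_except_induced dc).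
have [/iso_C5_dynamic_except //|notC5] := classic (iso_C5 (induced e S)).
have [c [pc hc]] := minimal (induced_simple S sg) (induced_connected se vS conn)
  (contra_not (@has_K5_minor_induced _ _ S) noK5) notC5
  (induced_nedges_lt se vS wS evw).
by exists c; split=> // x _; apply: hc.
Qed.

Lemma cut_vertex_dynamic_colorable (C : {set T}) :
  separates e v C -> C != set0 -> ~: (v |: C) != set0 -> dynamic_4_colorable e.
Proof.
move=> sepC C0 D0; have [se _] := sg; have [vC _] := sepC.
have conn a b : connect e a b by rewrite -connect_restrT (proj2 cg) ?inE.
set D := ~: (v |: C); have sepD : separates e v D := separates_setC se sepC.
have [u1 u1C vu1] := separates_neighbor se sepC conn C0.
have [u2 u2D vu2] := separates_neighbor se sepD conn D0.
have u1D : u1 \notin v |: D.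
  by rewrite !inE negb_or negbK u1C orbT andbT; apply: contraNneq vC => <-.
have u2C : u2 \notin v |: C by rewrite -in_setC.
have [c1 dc1] := piece_dynamic_except (setU11 v C) u2C vu2
  (separates_connect sepC conn).
have [c2 dc2] := piece_dynamic_except (setU11 v D) u1D vu1
  (separates_connect sepD conn).
apply: (glue_dynamic_colorable (setU1_setC_setI v C) (setU1_setC_setU v C)
  (separates_edge se sepC) _ _ vu1 vu2 dc1 dc2); first by rewrite setU1r.
by rewrite setU1r.
Qed.

End CutVertex.

Theorem lemma2p1 (T : finType) (e : rel T) :
  simple_graph e -> connected_graph e -> ~ has_K5_minor e -> ~ iso_C5 e ->
  ~ dynamic_4_colorable e ->
  (forall (T' : finType) (e' : rel T'),
      simple_graph e' -> connected_graph e' -> ~ has_K5_minor e' -> ~ iso_C5 e' ->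
      nedges e' < nedges e -> dynamic_4_colorable e') ->
  two_connected e.
Proof.
move=> sg cg noK5 _ not_dyn minimal.
have T_gt2 : 2 < #|T|.
  by rewrite ltnNge; apply/negP => /(dynamic_colorable_small sg.2).
split=> // v; split; first by rewrite -card_gt0 cardsC1; case: #|T| T_gt2 => [|[|]].
move=> x y xA yA; apply: contraT => nxy; exfalso; apply: not_dyn.
have [xv yv] : x != v /\ y != v by rewrite !inE in xA yA.
apply: (cut_vertex_dynamic_colorable sg cg noK5 minimal (component_separates e xv)).
  by apply/set0Pn; exists x; rewrite inE.
by apply/set0Pn; exists y; rewrite !inE negb_or yv nxy.
Qed.
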